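(* Let $F$ be an algebraically closed field, $R$ an $F$-algebra, $\sigma$ an $F$-algebra automorphism and $\delta$ a $\sigma$-derivation of $R$, and $T=R[x;\sigma,\delta]$. Assume that $T$ is a Hopf $F$-algebra and that $R$ is a right or left coideal subalgebra of $T$. Then either every $M\in\Xi(T)$ is of invariant type, or every $M\in\Xi(T)$ is of variant type.
   Context: Hopf algebras have bijective antipode. $R[x;\sigma,\delta]$ is the skew polynomial algebra with $xr-\sigma(r)x=\delta(r)$, $\delta(ab)=\delta(a)b+\sigma(a)\delta(b)$. $\Xi(T)$ is the set of ideals $M$ of $T$ with $T/M\cong F$. For $M\in\Xi(T)$ put $\mathfrak m=M\cap R$. $M$ is of invariant type if $\sigma(\mathfrak m)=\mathfrak m$ and $\delta(\mathfrak m)\subseteq\mathfrak m$; $M$ is of variant type if $\sigma(\mathfrak m)\neq\mathfrak m$ and $\delta([R,R])\subseteq\mathfrak m$, where $[R,R]$ is the set of commutators. *)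

From HB Require Import structures.
From mathcomp Require Import all_boot all_order all_algebra.
Set Implicit Arguments. Unset Strict Implicit. Unset Printing Implicit Defensive.
Import Order.TTheory GRing.Theory.
Local Open Scope ring_scope.

Section Defs.
Variable F : fieldType.

Definition lin_functional (V : lmodType F) (f : V -> F) : Prop :=
  forall (k : F) (a b : V), f (k *: a + b) = k * f a + f b.

Definition lin_map (V W : lmodType F) (f : V -> W) : Prop :=
  forall (k : F) (a b : V), f (k *: a + b) = k *: f a + f b.

Definition alg_hom (A B : algType F) (f : A -> B) : Prop :=
  [/\ lin_map f, forall a b, f (a * b) = f a * f b & f 1 = 1].

Definition alg_char (A : algType F) (f : A -> F) : Prop :=
  [/\ lin_functional f, forall a b, f (a * b) = f a * f b & f 1 = 1].

Definition alg_automorphism (A : algType F) (s : A -> A) : Prop :=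
  alg_hom s /\ bijective s.

Definition sigma_derivation (A : algType F) (s d : A -> A) : Prop :=
  lin_map d /\ forall a b, d (a * b) = d a * b + s a * d b.

(* T = R[x; sigma, delta] (Goodearl-Warfield): iota embeds R as a subalgebra of
   T, T is a free left R-module with basis 1, x, x^2, ..., and
   x r - sigma(r) x = delta(r) for all r in R. *)
Definition is_skew_poly_ext (R T : algType F) (iota : R -> T)
    (s d : R -> R) (x : T) : Prop :=
  [/\ alg_hom iota,
      forall r, x * iota r - iota (s r) * x = iota (d r),
      forall t : T, exists c : seq R,
        t = \sum_(i < size c) iota c`_i * x ^+ i
    & forall c : seq R,
        \sum_(i < size c) iota c`_i * x ^+ i = 0 -> forall i, c`_i = 0].

(* An element of T (x) T (resp. T (x) T (x) T) is represented by a finite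
   list of elementary tensors, the list [:: (a1,b1); ...] standing for
   a1 (x) b1 + ... .  Two representatives denote the same tensor iff all
   functionals f (x) g (with f, g linear functionals) agree on them
   (over a field these separate the points of the algebraic tensor product). *)
Variable T : algType F.

Definition tens2 := seq (T * T).
Definition tens3 := seq (T * T * T).

Definition ev2 (f g : T -> F) (u : tens2) : F :=
  \sum_(p <- u) f p.1 * g p.2.
Definition ev3 (f g h : T -> F) (u : tens3) : F :=
  \sum_(p <- u) f p.1.1 * g p.1.2 * h p.2.

Definition teq2 (u v : tens2) : Prop :=
  forall f g, lin_functional f -> lin_functional g -> ev2 f g u = ev2 f g v.
Definition teq3 (u v : tens3) : Prop :=
  forall f g h, lin_functional f -> lin_functional g -> lin_functional h ->
    ev3 f g h u = ev3 f g h v.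

Definition tscale (k : F) (u : tens2) : tens2 := [seq (k *: p.1, p.2) | p <- u].
Definition tmul (u v : tens2) : tens2 := [seq (p.1 * q.1, p.2 * q.2) | p <- u, q <- v].

Definition Delta_id (D : T -> tens2) (u : tens2) : tens3 :=
  flatten [seq [seq (q.1, q.2, p.2) | q <- D p.1] | p <- u].
Definition id_Delta (D : T -> tens2) (u : tens2) : tens3 :=
  flatten [seq [seq (p.1, q.1, q.2) | q <- D p.2] | p <- u].

Definition is_hopf (D : T -> tens2) (eps : T -> F) (S : T -> T) : Prop :=
      (forall k a b, teq2 (D (k *: a + b)) (tscale k (D a) ++ D b)) /\
      (forall a b, teq2 (D (a * b)) (tmul (D a) (D b))) /\
      teq2 (D 1) [:: (1, 1)] /\
      (forall t, teq3 (Delta_id D (D t)) (id_Delta D (D t))) /\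
      alg_char eps /\
      (forall t, \sum_(p <- D t) eps p.1 *: p.2 = t) /\
      (forall t, \sum_(p <- D t) eps p.2 *: p.1 = t) /\
      lin_map S /\
      (forall t, \sum_(p <- D t) S p.1 * p.2 = (eps t)%:A) /\
      (forall t, \sum_(p <- D t) p.1 * S p.2 = (eps t)%:A) /\
      bijective S.

(* C is a right coideal: Delta(C) is contained in C (x) T;
   left coideal: Delta(C) is contained in T (x) C. *)
Definition right_coideal (D : T -> tens2) (C : T -> Prop) : Prop :=
  forall c, C c -> exists u : tens2, teq2 (D c) u /\ forall p, p \in u -> C p.1.
Definition left_coideal (D : T -> tens2) (C : T -> Prop) : Prop :=
  forall c, C c -> exists u : tens2, teq2 (D c) u /\ forall p, p \in u -> C p.2.

Definition two_sided_ideal (M : T -> Prop) : Prop :=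
  [/\ M 0, (forall k a b, M a -> M b -> M (k *: a + b))
    & forall a b, M b -> M (a * b) /\ M (b * a)].

(* M in Xi(T): M is an ideal of T with T/M isomorphic to F (as F-algebras),
   i.e. M is the kernel of an (automatically surjective) F-algebra map T -> F. *)
Definition in_Xi (M : T -> Prop) : Prop :=
  two_sided_ideal M /\
  exists phi : T -> F, alg_char phi /\ forall t, M t <-> phi t = 0.

End Defs.

Section Types.
Variables (F : fieldType) (R T : algType F).
Variables (iota : R -> T) (s d : R -> R).

Definition contr (M : T -> Prop) : R -> Prop := fun r => M (iota r).

Definition invariant_type (M : T -> Prop) : Prop :=
  let m := contr M in
  (forall r, m r <-> exists r', m r' /\ s r' = r) /\
  (forall r, m r -> m (d r)).

Definition variant_type (M : T -> Prop) : Prop :=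
  let m := contr M in
  ~ (forall r, m r <-> exists r', m r' /\ s r' = r) /\
  (forall a b : R, m (d (a * b - b * a))).
End Types.

(* Points of Xi(T) are the kernels of characters phi : T -> F, and the type of
   ker phi only depends on whether phi o iota is sigma-invariant.  Characters of
   the Hopf algebra T form a group under convolution, with inverse phi o S, and
   since R is a coideal the convolution of two characters restricted to R only
   depends on their restrictions to R.  A character that is not invariant is
   determined by its restriction to R (the relation x r - s(r) x = d(r) fixes
   its value at x); using it, convolution shows that every character is
   determined by its restriction to R.  An invariant character, however, kills
   d(R), so its restriction to R extends to T with x sent to any scalar.  Hence
   invariant and non-invariant characters cannot coexist. *)

From mathcomp Require Import all_boot all_order all_algebra.
From mathcomp Require Import ring.
From Stdlib Require Import Classical ClassicalEpsilon.
Set Implicit Arguments. Unset Strict Implicit. Unset Printing Implicit Defensive.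
Import GRing.Theory.
Local Open Scope ring_scope.

Section LinearMaps.
Variables (F : fieldType) (V W : lmodType F).

Lemma lin_map0 (f : V -> W) : lin_map f -> f 0 = 0.
Proof.
move=> lf; apply: (@addrI _ (f 0)); rewrite addr0 -{1}[f 0]scale1r -lf.
by rewrite scale1r addr0.
Qed.

Lemma lin_mapD (f : V -> W) a b : lin_map f -> f (a + b) = f a + f b.
Proof. by move=> lf; have := lf 1 a b; rewrite !scale1r. Qed.

Lemma lin_mapZ (f : V -> W) k a : lin_map f -> f (k *: a) = k *: f a.
Proof. by move=> lf; rewrite -[k *: a]addr0 lf lin_map0 // addr0. Qed.

Lemma lin_mapB (f : V -> W) a b : lin_map f -> f (a - b) = f a - f b.
Proof. by move=> lf; rewrite lin_mapD // -scaleN1r lin_mapZ // scaleN1r. Qed.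

Lemma lin_map_sum (f : V -> W) I (r : seq I) (G : I -> V) : lin_map f ->
  f (\sum_(i <- r) G i) = \sum_(i <- r) f (G i).
Proof.
move=> lf; elim: r => [|i r IH]; first by rewrite !big_nil lin_map0.
by rewrite !big_cons lin_mapD // IH.
Qed.

End LinearMaps.

Section LinearFunctionals.
Variables (F : fieldType) (V : lmodType F).

Lemma lin_functional_map (f : V -> F) : lin_functional f -> lin_map (f : V -> F^o).
Proof. by []. Qed.

Lemma lin_functional0 (f : V -> F) : lin_functional f -> f 0 = 0.
Proof. by move/lin_functional_map/lin_map0. Qed.

Lemma lin_functionalD (f : V -> F) a b : lin_functional f -> f (a + b) = f a + f b.
Proof. by move/lin_functional_map/lin_mapD. Qed.

Lemma lin_functionalZ (f : V -> F) k a : lin_functional f -> f (k *: a) = k * f a.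
Proof. by move/lin_functional_map/lin_mapZ. Qed.

Lemma lin_functionalB (f : V -> F) a b : lin_functional f -> f (a - b) = f a - f b.
Proof. by move/lin_functional_map/lin_mapB. Qed.

Lemma lin_functional_sum (f : V -> F) I (r : seq I) (G : I -> V) :
  lin_functional f -> f (\sum_(i <- r) G i) = \sum_(i <- r) f (G i).
Proof. by move/lin_functional_map/lin_map_sum. Qed.

Lemma lin_functional_comp (U : lmodType F) (g : U -> V) (f : V -> F) :
  lin_map g -> lin_functional f -> lin_functional (f \o g).
Proof. by move=> lg lf k a b /=; rewrite lg lf. Qed.

End LinearFunctionals.

Section Characters.
Variables (F : fieldType) (A : algType F).

Lemma alg_char_scalar (phi : A -> F) k : alg_char phi -> phi k%:A = k.
Proof. by case=> lphi _ phi1; rewrite lin_functionalZ // phi1 mulr1. Qed.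

Lemma alg_char_exp (phi : A -> F) a n : alg_char phi -> phi (a ^+ n) = phi a ^+ n.
Proof.
case=> _ mphi phi1; elim: n => [|n IH]; first by rewrite !expr0.
by rewrite !exprS mphi IH.
Qed.

End Characters.

Lemma sum_nth_widen (Z : zmodType) (V : nmodType) (G : Z -> nat -> V) (c : seq Z) N :
  (forall i, G 0 i = 0) -> (size c <= N)%N ->
  \sum_(i < size c) G c`_i i = \sum_(i < N) G c`_i i.
Proof.
move=> G0 cN; rewrite (big_ord_widen N (fun i => G c`_i i) cN) big_mkcond /=.
by apply: eq_bigr => i _; case: ltnP => // ci; rewrite nth_default.
Qed.

Section SkewPolynomial.
Variables (F : fieldType) (R T : algType F) (iota : R -> T) (s d : R -> R) (x : T).
Hypothesis ore : is_skew_poly_ext iota s d x.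

Lemma iota_lin : lin_map iota.
Proof. by case: ore => -[]. Qed.

Lemma iota_mul a b : iota (a * b) = iota a * iota b.
Proof. by case: ore => -[]. Qed.

Lemma iota1 : iota 1 = 1.
Proof. by case: ore => -[]. Qed.

Lemma mulx_iota e : x * iota e = iota (s e) * x + iota (d e).
Proof. by case: ore => _ /(_ e) <- _ _; rewrite addrC subrK. Qed.

Lemma alg_char_twist (phi : T -> F) r : alg_char phi ->
  phi x * (phi (iota r) - phi (iota (s r))) = phi (iota (d r)).
Proof.
case=> lphi mphi _; rewrite mulrBr [_ * phi (iota (s r))]mulrC -!mphi.
by rewrite -lin_functionalB //; case: ore => _ /(_ r) ->.
Qed.

Definition skew_sum (c : seq R) : T := \sum_(i < size c) iota c`_i * x ^+ i.

Lemma skew_sum_widen c N : (size c <= N)%N ->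
  skew_sum c = \sum_(i < N) iota c`_i * x ^+ i.
Proof.
apply: (@sum_nth_widen _ _ (fun r i => iota r * x ^+ i)) => i.
by rewrite lin_map0 ?mul0r //; apply: iota_lin.
Qed.

Lemma skew_sum_nth_eq a b : skew_sum a = skew_sum b -> forall i, a`_i = b`_i.
Proof.
move=> eab i; pose N := maxn (size a) (size b).
have [aN bN] : (size a <= N)%N /\ (size b <= N)%N by rewrite leq_maxl leq_maxr.
have [iN | Ni] := ltnP i N; last by rewrite !nth_default // (leq_trans _ Ni).
case: ore => _ _ _ /(_ (mkseq (fun j => a`_j - b`_j) N)) ab0.
apply/eqP; rewrite -subr_eq0 -(nth_mkseq 0 (fun j => a`_j - b`_j) iN) ab0 //.
move: eab; rewrite (skew_sum_widen aN) (skew_sum_widen bN) => /eqP.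
rewrite -subr_eq0 -sumrB size_mkseq => /eqP E; rewrite -[RHS]E; apply: eq_bigr => j _.
by rewrite nth_mkseq // lin_mapB ?mulrBl //; apply: iota_lin.
Qed.

Lemma skew_sum_surj t : exists c, t = skew_sum c.
Proof. by case: ore => _ _ /(_ t). Qed.

Definition coefs (t : T) : seq R :=
  proj1_sig (constructive_indefinite_description _ (skew_sum_surj t)).

Lemma coefsK t : skew_sum (coefs t) = t.
Proof. by rewrite /coefs; case: constructive_indefinite_description. Qed.

Lemma skew_sum1 r : skew_sum [:: r] = iota r.
Proof. by rewrite /skew_sum big_ord1 expr0 mulr1. Qed.

Lemma skew_sum_cons0 c : skew_sum (0 :: c) = skew_sum c * x.
Proof.
rewrite /skew_sum big_ord_recl lin_map0 ?mul0r ?add0r; last exact: iota_lin.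
by rewrite mulr_suml; apply: eq_bigr => i _; rewrite exprSr mulrA.
Qed.

Lemma alg_char_eq (phi psi : T -> F) : alg_char phi -> alg_char psi ->
  (forall r, phi (iota r) = psi (iota r)) -> phi x = psi x -> phi =1 psi.
Proof.
move=> hphi hpsi er ex t; rewrite -(coefsK t).
have [lphi mphi _] := hphi; have [lpsi mpsi _] := hpsi.
rewrite !lin_functional_sum //; apply: eq_bigr => i _.
by rewrite mphi mpsi !alg_char_exp // er ex.
Qed.

Section CharacterExtension.
Variables (chi : R -> F) (mu : F).
Hypothesis hchi : alg_char chi.
Hypothesis chi_twist : forall e, mu * chi (s e) + chi (d e) = mu * chi e.

(* [char_ext] sends x to mu; it is well defined since coefficient lists are
   unique up to trailing zeros, and multiplicative because [chi_twist] is the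
   image of x e = s(e) x + d(e). *)
Definition coef_eval (c : seq R) : F := \sum_(i < size c) chi c`_i * mu ^+ i.

Definition char_ext (t : T) : F := coef_eval (coefs t).

Let lchi : lin_functional chi. Proof. by case: hchi. Qed.

Lemma coef_eval_widen c N : (size c <= N)%N ->
  coef_eval c = \sum_(i < N) chi c`_i * mu ^+ i.
Proof.
apply: (@sum_nth_widen _ _ (fun r i => chi r * mu ^+ i)) => i.
by rewrite lin_functional0 ?mul0r.
Qed.

Lemma char_ext_skew_sum c : char_ext (skew_sum c) = coef_eval c.
Proof.
have ec := skew_sum_nth_eq (coefsK (skew_sum c)).
pose N := maxn (size (coefs (skew_sum c))) (size c).
rewrite /char_ext (@coef_eval_widen _ N) ?leq_maxl // (@coef_eval_widen c N) ?leq_maxr //.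
by apply: eq_bigr => i _; rewrite ec.
Qed.

Lemma char_ext_iota r : char_ext (iota r) = chi r.
Proof. by rewrite -skew_sum1 char_ext_skew_sum /coef_eval big_ord1 expr0 mulr1. Qed.

Lemma char_ext_mulx t : char_ext (t * x) = char_ext t * mu.
Proof.
rewrite -(coefsK t) -skew_sum_cons0 !char_ext_skew_sum /coef_eval big_ord_recl.
rewrite lin_functional0 // mul0r add0r mulr_suml.
by apply: eq_bigr => i _; rewrite exprSr mulrA.
Qed.

Lemma char_ext_mulXn t n : char_ext (t * x ^+ n) = char_ext t * mu ^+ n.
Proof.
elim: n => [|n IH]; first by rewrite !expr0 !mulr1.
by rewrite !exprSr mulrA char_ext_mulx IH mulrA.
Qed.

Lemma char_ext_x : char_ext x = mu.
Proof.
rewrite -[x]mul1r char_ext_mulx -iota1 char_ext_iota.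
by case: hchi => _ _ ->; rewrite mul1r.
Qed.

Lemma char_ext_lin : lin_functional char_ext.
Proof.
move=> k a b; rewrite -(coefsK a) -(coefsK b).
set ca := coefs a; set cb := coefs b; pose N := maxn (size ca) (size cb).
have [aN bN] : (size ca <= N)%N /\ (size cb <= N)%N by rewrite leq_maxl leq_maxr.
pose c := mkseq (fun i => k *: ca`_i + cb`_i) N.
have -> : k *: skew_sum ca + skew_sum cb = skew_sum c.
  rewrite (skew_sum_widen aN) (skew_sum_widen bN) /skew_sum size_mkseq.
  rewrite scaler_sumr -big_split; apply: eq_bigr => i _ /=.
  by rewrite nth_mkseq // lin_mapD ?lin_mapZ ?mulrDl ?scalerAl //; apply: iota_lin.
rewrite !char_ext_skew_sum (coef_eval_widen aN) (coef_eval_widen bN) /coef_eval.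
rewrite size_mkseq mulr_sumr -big_split; apply: eq_bigr => i _ /=.
by rewrite nth_mkseq // lin_functionalD // lin_functionalZ // mulrDl mulrA.
Qed.

Lemma char_ext_monomial c n e :
  char_ext (iota c * x ^+ n * iota e) = chi c * mu ^+ n * chi e.
Proof.
have [_ mchi _] := hchi.
elim: n e => [|n IH] e; first by rewrite !expr0 !mulr1 -iota_mul char_ext_iota mchi.
rewrite exprSr mulrA -(mulrA _ x) mulx_iota mulrDr !mulrA.
rewrite lin_functionalD; last exact: char_ext_lin.
rewrite char_ext_mulx !IH exprSr.
transitivity (chi c * mu ^+ n * (mu * chi (s e) + chi (d e))); first ring.
by rewrite chi_twist; ring.
Qed.

Lemma char_ext_mul_iota t e : char_ext (t * iota e) = char_ext t * chi e.
Proof.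
rewrite -(coefsK t) char_ext_skew_sum /skew_sum mulr_suml.
rewrite lin_functional_sum; last exact: char_ext_lin.
by rewrite /coef_eval mulr_suml; apply: eq_bigr => i _; rewrite char_ext_monomial.
Qed.

Lemma char_ext_char : alg_char char_ext.
Proof.
split; first exact: char_ext_lin.
- move=> a b; rewrite -[in LHS](coefsK b) -[in RHS](coefsK b) char_ext_skew_sum.
  rewrite /skew_sum mulr_sumr lin_functional_sum; last exact: char_ext_lin.
  rewrite /coef_eval mulr_sumr; apply: eq_bigr => i _.
  by rewrite mulrA char_ext_mulXn char_ext_mul_iota mulrA.
- by rewrite -iota1 char_ext_iota; case: hchi.
Qed.

End CharacterExtension.

End SkewPolynomial.

Section Convolution.
Variables (F : fieldType) (T : algType F).
Variables (D : T -> tens2 T) (eps : T -> F) (S : T -> T).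
Hypothesis hopf : is_hopf D eps S.

Definition conv (f g : T -> F) (t : T) : F := ev2 f g (D t).

Lemma hopf_eps_char : alg_char eps.
Proof. by case: hopf => _ [_ [_ [_ []]]]. Qed.

Lemma hopf_antipode_lin : lin_map S.
Proof. by case: hopf => _ [_ [_ [_ [_ [_ [_ []]]]]]]. Qed.

Lemma eq_conv (f f' g g' : T -> F) : f =1 f' -> g =1 g' -> conv f g =1 conv f' g'.
Proof. by move=> ef eg t; apply: eq_bigr => p _; rewrite ef eg. Qed.

Lemma conv_lin (f g : T -> F) : lin_functional f -> lin_functional g ->
  lin_functional (conv f g).
Proof.
move=> lf lg k a b; have [DZ _] := hopf; rewrite /conv (DZ k a b f g lf lg).
rewrite /ev2 big_cat big_map mulr_sumr; congr (_ + _).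
by apply: eq_bigr => p _; rewrite lin_functionalZ // mulrA.
Qed.

Lemma conv_mul (f g : T -> F) a b : lin_functional f -> lin_functional g ->
  conv f g (a * b) = \sum_(p <- D a) \sum_(q <- D b) f (p.1 * q.1) * g (p.2 * q.2).
Proof.
move=> lf lg; have [_ [DM _]] := hopf.
by rewrite /conv (DM a b f g lf lg) /ev2 big_allpairs_dep.
Qed.

Lemma conv1 (f g : T -> F) : lin_functional f -> lin_functional g ->
  conv f g 1 = f 1 * g 1.
Proof.
by move=> lf lg; have [_ [_ [D1 _]]] := hopf; rewrite /conv (D1 f g lf lg) /ev2 big_seq1.
Qed.

Lemma conv_char (f g : T -> F) : alg_char f -> alg_char g -> alg_char (conv f g).
Proof.
move=> [lf mf f1] [lg mg g1]; split; first exact: conv_lin.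
- move=> a b; rewrite conv_mul // /conv /ev2 big_distrl /=.
  apply: eq_bigr => p _; rewrite big_distrr /=; apply: eq_bigr => q _.
  by rewrite mf mg; ring.
- by rewrite conv1 // f1 g1 mulr1.
Qed.

Lemma conv_assoc (f g h : T -> F) :
  lin_functional f -> lin_functional g -> lin_functional h ->
  conv f (conv g h) =1 conv (conv f g) h.
Proof.
move=> lf lg lh t; have [_ [_ [_ [DA _]]]] := hopf.
have := DA t f g h lf lg lh; rewrite /ev3 /Delta_id /id_Delta !big_flatten /=.
rewrite !big_map; under eq_bigr do rewrite big_map; under [RHS]eq_bigr do rewrite big_map.
move=> /= E; rewrite /conv /ev2.
under eq_bigr do rewrite /ev2 mulr_sumr; under [RHS]eq_bigr do rewrite /ev2 mulr_suml.
by rewrite E; apply: eq_bigr => p _; apply: eq_bigr => q _; rewrite mulrA.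
Qed.

Lemma conv_eps_l (g : T -> F) : lin_functional g -> conv eps g =1 g.
Proof.
move=> lg t; have [_ [_ [_ [_ [_ [CL _]]]]]] := hopf.
rewrite -{2}(CL t) lin_functional_sum //.
by apply: eq_bigr => p _; rewrite lin_functionalZ.
Qed.

Lemma conv_eps_r (g : T -> F) : lin_functional g -> conv g eps =1 g.
Proof.
move=> lg t; have [_ [_ [_ [_ [_ [_ [CR _]]]]]]] := hopf.
rewrite -{2}(CR t) lin_functional_sum //.
by apply: eq_bigr => p _; rewrite lin_functionalZ // mulrC.
Qed.


Lemma alg_char_sum_mul (phi : T -> F) (r : tens2 T) (G1 G2 : T -> T) :
  alg_char phi ->
  phi (\sum_(p <- r) G1 p.1 * G2 p.2) = ev2 (phi \o G1) (phi \o G2) r.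
Proof. by case=> lphi mphi _; rewrite lin_functional_sum //; apply: eq_bigr => p _. Qed.

Lemma conv_antipode_r (phi : T -> F) : alg_char phi -> conv phi (phi \o S) =1 eps.
Proof.
move=> hphi t; have [_ [_ [_ [_ [_ [_ [_ [_ [_ [AR _]]]]]]]]]] := hopf.
by rewrite -(alg_char_scalar (eps t) hphi) -AR (alg_char_sum_mul _ id S hphi).
Qed.

Lemma conv_antipode_l (phi : T -> F) : alg_char phi -> conv (phi \o S) phi =1 eps.
Proof.
move=> hphi t; have [_ [_ [_ [_ [_ [_ [_ [_ [AL _]]]]]]]]] := hopf.
by rewrite -(alg_char_scalar (eps t) hphi) -AL (alg_char_sum_mul _ S id hphi).
Qed.

Lemma lin_functional_mull (f : T -> F) r : lin_functional f ->
  lin_functional (fun t => f (r * t)).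
Proof. by move=> lf k a b; rewrite mulrDr -scalerAr lf. Qed.

Lemma lin_functional_mulr (f : T -> F) r : lin_functional f ->
  lin_functional (fun t => f (t * r)).
Proof. by move=> lf k a b; rewrite mulrDl -scalerAl lf. Qed.

Section AntipodeCharacter.
Variable phi : T -> F.
Hypothesis hphi : alg_char phi.
Let psi := phi \o S.

Let lphi : lin_functional phi. Proof. by case: hphi. Qed.
Let lpsi : lin_functional psi.
Proof. exact: lin_functional_comp hopf_antipode_lin lphi. Qed.

Lemma antipode_mulr_expand r b :
  psi (r * b) = \sum_(q <- D b) conv (fun t => psi (r * t)) phi q.1 * psi q.2.
Proof.
have lpsir := lin_functional_mull r lpsi.
rewrite -(conv_eps_r lpsir) -(eq_conv (frefl _) (conv_antipode_r hphi)).
by rewrite conv_assoc.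
Qed.

Lemma conv_antipode_mulr u b :
  conv (fun t => psi (t * b)) phi u = eps u * psi b.
Proof.
have [leps meps _] := hopf_eps_char.
transitivity (\sum_(q <- D b) psi q.2 *
    \sum_(p <- D u) \sum_(s <- D q.1) psi (p.1 * s.1) * phi (p.2 * s.2)).
  rewrite /conv /ev2; under eq_bigr do rewrite antipode_mulr_expand mulr_suml.
  rewrite exchange_big /=; apply: eq_bigr => q _; rewrite mulr_sumr.
  apply: eq_bigr => p _; rewrite /conv /ev2 !mulr_sumr !mulr_suml.
  by apply: eq_bigr => s _; case: hphi => _ mphi _; rewrite mphi; ring.
under eq_bigr do rewrite -(conv_mul _ _ lpsi lphi) conv_antipode_l // meps.
by rewrite -(conv_eps_l lpsi) /conv /ev2 mulr_sumr; apply: eq_bigr => q _; ring.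
Qed.

Lemma antipode_char : alg_char (phi \o S).
Proof.
split=> [//||]; last first.
  have := conv_antipode_r hphi 1; rewrite conv1 //.
  by case: hphi => _ _ ->; case: hopf_eps_char => _ _ ->; rewrite mul1r.
move=> a b; have lpsib := lin_functional_mulr b lpsi.
rewrite -[LHS](conv_eps_r lpsib) -(eq_conv (frefl _) (conv_antipode_r hphi)).
rewrite conv_assoc // (eq_conv (conv_antipode_mulr ^~ b) (frefl _)).
rewrite -[(phi \o S) a](conv_eps_l lpsi) /conv /ev2 mulr_suml.
by apply: eq_bigr => p _; rewrite /= mulrAC.
Qed.

End AntipodeCharacter.

Lemma conv_cancel_r (f g k k' : T -> F) :
  lin_functional f -> lin_functional g -> lin_functional k -> lin_functional k' ->
  conv k k' =1 eps -> conv f k =1 conv g k -> f =1 g.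
Proof.
move=> lf lg lk lk' kk' efg t.
rewrite -(conv_eps_r lf) -(conv_eps_r lg) -!(eq_conv (frefl _) kk') !conv_assoc //.
exact: eq_conv.
Qed.

Lemma conv_cancel_l (f g k k' : T -> F) :
  lin_functional f -> lin_functional g -> lin_functional k -> lin_functional k' ->
  conv k' k =1 eps -> conv k f =1 conv k g -> f =1 g.
Proof.
move=> lf lg lk lk' kk' efg t.
rewrite -(conv_eps_l lf) -(conv_eps_l lg) -!(eq_conv kk' (frefl _)) -!conv_assoc //.
exact: eq_conv.
Qed.

End Convolution.

Section Classification.
Variables (F : fieldType) (R T : algType F) (iota : R -> T) (s d : R -> R) (x : T).
Variables (D : T -> tens2 T) (eps : T -> F) (S : T -> T).
Hypothesis ore : is_skew_poly_ext iota s d x.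
Hypothesis hopf : is_hopf D eps S.

Definition sigma_invariant (phi : T -> F) : Prop :=
  forall r, phi (iota (s r)) = phi (iota r).

Lemma alg_char_comp_iota (phi : T -> F) : alg_char phi -> alg_char (phi \o iota).
Proof.
case=> lphi mphi phi1; split=> [|a b|] /=.
- exact: lin_functional_comp (iota_lin ore) lphi.
- by rewrite (iota_mul ore) mphi.
- by rewrite (iota1 ore).
Qed.

Lemma noninvariant_char_eq (phi psi : T -> F) : alg_char phi -> alg_char psi ->
  ~ sigma_invariant phi -> (forall r, phi (iota r) = psi (iota r)) -> phi =1 psi.
Proof.
move=> hphi hpsi /not_all_ex_not [r sr] eR; apply: (alg_char_eq ore) => //.
have := alg_char_twist ore r hpsi; rewrite -!eR -(alg_char_twist ore r hphi).
have nz : phi (iota r) - phi (iota (s r)) != 0 by rewrite subr_eq0 eq_sym; apply/eqP.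
by move/(mulIf nz).
Qed.

Lemma invariant_char_shift (phi : T -> F) mu : alg_char phi -> sigma_invariant phi ->
  exists2 phi', alg_char phi' & phi' x = mu /\ forall r, phi' (iota r) = phi (iota r).
Proof.
move=> hphi inv; have hchi := alg_char_comp_iota hphi.
(* By invariance [alg_char_twist] gives phi (iota (d e)) = 0, so any mu fits. *)
have twist e : mu * phi (iota (s e)) + phi (iota (d e)) = mu * phi (iota e).
  by rewrite -(alg_char_twist ore e hphi) inv subrr mulr0 addr0.
exists (char_ext ore (phi \o iota) mu); first exact: char_ext_char.
by split=> [|r]; rewrite ?char_ext_x ?char_ext_iota.
Qed.

Lemma conv_iota_right_coideal (f f' g : T -> F) r :
  right_coideal D (fun t => exists r, t = iota r) ->
  lin_functional f -> lin_functional f' -> lin_functional g ->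
  (forall r, f (iota r) = f' (iota r)) -> conv D f g (iota r) = conv D f' g (iota r).
Proof.
move=> hco lf lf' lg eR; have [u [Du uR]] := hco (iota r) (ex_intro _ r erefl).
rewrite /conv !(Du _ g) //; apply: eq_big_seq => p /uR [r' ->].
by rewrite eR.
Qed.

Lemma conv_iota_left_coideal (f g g' : T -> F) r :
  left_coideal D (fun t => exists r, t = iota r) ->
  lin_functional f -> lin_functional g -> lin_functional g' ->
  (forall r, g (iota r) = g' (iota r)) -> conv D f g (iota r) = conv D f g' (iota r).
Proof.
move=> hco lf lg lg' eR; have [u [Du uR]] := hco (iota r) (ex_intro _ r erefl).
rewrite /conv !(Du f) //; apply: eq_big_seq => p /uR [r' ->].
by rewrite eR.
Qed.

Section NoninvariantCharacter.
Hypothesis coideal : right_coideal D (fun t => exists r, t = iota r) \/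
                     left_coideal D (fun t => exists r, t = iota r).
Variable chi : T -> F.
Hypothesis hchi : alg_char chi.
Hypothesis chi_var : ~ sigma_invariant chi.

Let lchi : lin_functional chi. Proof. by case: hchi. Qed.
Let lchiS : lin_functional (chi \o S). Proof. by case: (antipode_char hopf hchi). Qed.
Let leps : lin_functional eps. Proof. by case: (hopf_eps_char hopf). Qed.

Lemma alg_char_eps_on_iota (h : T -> F) : alg_char h ->
  (forall r, h (iota r) = eps (iota r)) -> h =1 eps.
Proof.
move=> hh eR; have [lh _ _] := hh.
case: coideal => hco.
- apply: (conv_cancel_r hopf lh leps lchi lchiS (conv_antipode_r hopf hchi)).
  move=> t; rewrite (conv_eps_l hopf lchi); symmetry.
  apply: (noninvariant_char_eq hchi (conv_char hopf hh hchi) chi_var) => r.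
  by rewrite (conv_iota_right_coideal _ hco lh leps lchi eR) (conv_eps_l hopf lchi).
- apply: (conv_cancel_l hopf lh leps lchi lchiS (conv_antipode_l hopf hchi)).
  move=> t; rewrite (conv_eps_r hopf lchi); symmetry.
  apply: (noninvariant_char_eq hchi (conv_char hopf hchi hh) chi_var) => r.
  by rewrite (conv_iota_left_coideal _ hco lchi lh leps eR) (conv_eps_r hopf lchi).
Qed.

Lemma alg_char_eq_on_iota (phi phi' : T -> F) : alg_char phi -> alg_char phi' ->
  (forall r, phi (iota r) = phi' (iota r)) -> phi =1 phi'.
Proof.
move=> hphi hphi' eR; have hphiS := antipode_char hopf hphi.
have [lphi _ _] := hphi; have [lphi' _ _] := hphi'; have [lphiS _ _] := hphiS.
case: coideal => hco.
- apply: (conv_cancel_r hopf lphi lphi' lphiS lphi (conv_antipode_l hopf hphi)) => t.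
  rewrite (conv_antipode_r hopf hphi t); symmetry.
  apply: (alg_char_eps_on_iota (conv_char hopf hphi' hphiS)) => r.
  by rewrite (conv_iota_right_coideal _ hco lphi' lphi lphiS) ?(conv_antipode_r hopf).
- apply: (conv_cancel_l hopf lphi lphi' lphiS lphi (conv_antipode_r hopf hphi)) => t.
  rewrite (conv_antipode_l hopf hphi t); symmetry.
  apply: (alg_char_eps_on_iota (conv_char hopf hphiS hphi')) => r.
  by rewrite (conv_iota_left_coideal _ hco lphiS lphi' lphi) ?(conv_antipode_l hopf).
Qed.

Lemma no_invariant_char (phi : T -> F) : alg_char phi -> ~ sigma_invariant phi.
Proof.
move=> hphi inv.
have [phi' hphi' [phi'x eR]] := invariant_char_shift (phi x + 1) hphi inv.
have := alg_char_eq_on_iota hphi hphi' (fun r => esym (eR r)) x.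
by rewrite phi'x => /eqP; rewrite -subr_eq0 opprD addNKr oppr_eq0 oner_eq0.
Qed.

End NoninvariantCharacter.

End Classification.

Section KernelType.
Variables (F : fieldType) (R T : algType F) (iota : R -> T) (s d : R -> R) (x : T).
Hypothesis ore : is_skew_poly_ext iota s d x.
Hypothesis hs : alg_automorphism s.
Variables (M : T -> Prop) (phi : T -> F).
Hypothesis hphi : alg_char phi.
Hypothesis kerM : forall t, M t <-> phi t = 0.

Lemma invariant_kernel_type : sigma_invariant iota s phi -> invariant_type iota s d M.
Proof.
move=> inv; have [_ [s' _ s's]] := hs; split=> r; rewrite /contr.
- split=> [/kerM phi0 | [r' [/kerM phi0 <-]]]; last by apply/kerM; rewrite inv.
  by exists (s' r); split; [apply/kerM; rewrite -inv s's | apply: s's].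
- by move/kerM=> phi0; apply/kerM; rewrite -(alg_char_twist ore r hphi) inv subrr mulr0.
Qed.

Lemma variant_kernel_type : ~ sigma_invariant iota s phi -> variant_type iota s d M.
Proof.
move=> var; have [[ls ms s1] _] := hs; have [lphi mphi _] := hphi.
have ilin := iota_lin ore.
have phi_scalar (c : F) : phi (iota c%:A) = c.
  by rewrite lin_mapZ // (iota1 ore) (alg_char_scalar _ hphi).
have phiB a b : phi (iota (a - b)) = phi (iota a) - phi (iota b).
  by rewrite lin_mapB // lin_functionalB.
split=> [eqm | a b].
- apply: var => r; pose c := phi (iota r).
  have : contr iota M (s (r - c%:A)).
    by apply/eqm; exists (r - c%:A); split=> //; apply/kerM; rewrite phiB phi_scalar subrr.
  move/kerM; rewrite lin_mapB // lin_mapZ // s1 phiB phi_scalar.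
  by move/eqP; rewrite subr_eq0 => /eqP.
- apply/kerM; rewrite /contr -(alg_char_twist ore _ hphi) !phiB lin_mapB // !ms phiB.
  rewrite !(iota_mul ore) !mphi (mulrC (phi (iota a))) (mulrC (phi (iota (s a)))).
  by rewrite !subrr mulr0.
Qed.

End KernelType.

Theorem theorem4p5 (F : closedFieldType) (R T : algType F)
    (s d : R -> R) (iota : R -> T) (x : T)
    (D : T -> tens2 T) (eps : T -> F) (S : T -> T) :
  alg_automorphism s ->
  sigma_derivation s d ->
  is_skew_poly_ext iota s d x ->
  is_hopf D eps S ->
  (right_coideal D (fun t => exists r, t = iota r) \/
   left_coideal D (fun t => exists r, t = iota r)) ->
  (forall M : T -> Prop, in_Xi M -> invariant_type iota s d M) \/
  (forall M : T -> Prop, in_Xi M -> variant_type iota s d M).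
Proof.
move=> hs _ ore hopf coideal.
have [[chi hchi chi_var] | all_inv] :=
  classic (exists2 chi : T -> F, alg_char chi & ~ sigma_invariant iota s chi).
- right=> M [_ [phi [hphi kerM]]]; apply: (variant_kernel_type ore hs hphi kerM).
  exact: (no_invariant_char ore hopf coideal hchi chi_var hphi).
- left=> M [_ [phi [hphi kerM]]]; apply: (invariant_kernel_type ore hs hphi kerM).
  by apply: NNPP => var; apply: all_inv; exists phi.
Qed.
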